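(* Let $a,b,c,d\in\{1,\dots,\ell\}$ be distinct. For all positive integers $m,n,r,s$, in $A(\mathcal{H}^+)$ we have $[S_{abcd}(m,n,r,s)]=(-1)^{m+n+r+s}[S_{abcd}(1,1,1,1)]$, where $S_{abcd}(m,n,r,s)=h_a(-m)h_b(-n)h_c(-r)h_d(-s)\mathbf{1}$.
   Context: $\mathfrak{h}$ is an $\ell$-dimensional complex space with orthonormal basis $h_1,\dots,h_\ell$; $\mathcal{H}=M(1,0)$ is the free bosonic vertex operator algebra generated by Heisenberg modes $h(n)$ acting on the vacuum $\mathbf{1}$; $\mathcal{H}^+$ is the fixed-point subalgebra of the automorphism induced by $h\mapsto-h$. $A(\mathcal{H}^+)=\mathcal{H}^+/O(\mathcal{H}^+)$ is Zhu's algebra, $O(\mathcal{H}^+)$ spanned by $u\circ v=\sum_{i\ge0}\binom{\mathrm{wt}\,u}{i}u_{i-2}v$, product induced by $u*v=\sum_{i\ge0}\binom{\mathrm{wt}\,u}{i}u_{i-1}v$; $[u]=u+O(\mathcal{H}^+)$. *)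

From HB Require Import structures.
From mathcomp Require Import all_boot all_order all_algebra.
From mathcomp Require Import finmap.
From mathcomp Require Import monalg.

Set Implicit Arguments.
Unset Strict Implicit.
Unset Printing Implicit Defensive.

Import Order.TTheory GRing.Theory Num.Theory.
Local Open Scope ring_scope.

(* The free bosonic VOA  H = M(1,0)  for an l-dimensional space h with       *)
(* orthonormal basis h_0,...,h_(l-1) (indices shifted by one w.r.t. the      *)
(* paper), over a numeric algebraically closed field C (e.g. the complex     *)
(* numbers).  As a vector space M(1,0) = S(h ⊗ t^-1 C[t^-1]) is the          *)
(* polynomial algebra in the variables  x_(i,k) := h_i(-(k+1)),  i < l,      *)
(* k : nat; the vacuum 1 is the constant polynomial 1.                       *)

Definition hvarT (l : nat) := ('I_l * nat)%type.

Definition Fock (l : nat) (C : numClosedFieldType) :=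
  {malg C[cmonom (hvarT l)]}.

Section Heisenberg.
Variables (l : nat) (C : numClosedFieldType).
Local Notation V := (Fock l C).

(* creation operator h_i(-(k+1)) acting on M(1,0): multiplication by x_(i,k) *)
Definition hvar (i : 'I_l) (k : nat) : V := << ucm ((i, k) : hvarT l) >>.

Definition pderiv (w : hvarT l) (g : V) : V :=
  \sum_(m <- msupp g) << (g@_m * (m w)%:R) *g divcm m (ucm w) >>.

(* annihilation operator h_a(j), j >= 0:  h_a(0) = 0 on M(1,0),
   h_a(j) = j d/dx_(a,j-1) for j > 0  (from [h_a(m),h_b(n)] = m d_ab d_m+n,0) *)
Definition hann (a : 'I_l) (j : nat) (g : V) : V :=
  if j is j'.+1 then j%:R *: pderiv (a, j') g else 0.

(* weight (L(0)-eigenvalue) of a monomial: wt h_i(-(k+1)) = k+1 *)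
Definition mwt (m : cmonom (hvarT l)) : nat :=
  (\sum_(w <- finsupp m) m w * w.2.+1)%N.

Definition maxwt (g : V) : nat := (\max_(m <- msupp g) mwt m)%N.

Definition factors (m : cmonom (hvarT l)) : seq (hvarT l) :=
  flatten [seq nseq (m w) w | w <- enum_fset (finsupp m)].

End Heisenberg.

Definition gbinom (C : fieldType) (x : int) (k : nat) : C :=
  (\prod_(i < k) (x - i%:Z)%:~R) / (k`!)%:R.

Section Modes.
Variables (l : nat) (C : numClosedFieldType).
Local Notation V := (Fock l C).

(* The normal ordered product
     :  prod_{(a,k) in fs}  d^(k) h_a(z) :   (d^(k) = (d/dz)^k / k!)
   with  d^(k) h_a(z) = sum_j binom(-j-1,k) h_a(j) z^(-j-k-1).
   [nopart B fs t v] is the sum, over all choices of modes j (one for each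
   factor in fs, each in [-B,B]) with total sum t, of
     (prod binom(-j-1,k)) * (creation modes) (annihilation modes) v.
   Creation modes (j < 0) are applied after all annihilation modes (j >= 0):
   this is the normal ordering. *)
Fixpoint nopart (B : nat) (fs : seq (hvarT l)) (t : int) (v : V) : V :=
  match fs with
  | [::] => if t == 0 then v else 0
  | (a, k) :: fs' =>
      \sum_(j < (B + B).+1)
        let jj : int := j%:Z - B%:Z in
        gbinom C (- jj - 1) k *:
          (if jj < 0 then hvar C a `|jj|.-1 * nopart B fs' (t - jj) v
           else nopart B fs' (t - jj) (hann a `|jj| v))
  end.

(* For u = h_a1(-n1)...h_ak(-nk)1,  Y(u,z) = : d^(n1-1)h_a1(z) ... d^(nk-1)h_ak(z) :
   and u_p is the coefficient of z^(-p-1), i.e. the sum over the modes with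
   sum_t (j_t + n_t) = p + 1.  Acting on v only modes in [-B,B] with the bound
   B below can contribute (annihilation modes are <= maxwt v, and then the
   creation modes are determined up to this bound), so the truncation is
   exact. *)
Definition mono_mode (m : cmonom (hvarT l)) (p : int) (v : V) : V :=
  let fs := factors m in
  let N := (\sum_(w <- fs) w.2.+1)%N in
  let B := ((size fs).+1 * maxwt v + N + `|p| + 1)%N in
  nopart B fs (p + 1 - N%:Z) v.

(* the mode u_p of the vertex operator Y(u,z) = sum_p u_p z^(-p-1),
   extended linearly in u *)
Definition vmode (u : V) (p : int) (v : V) : V :=
  \sum_(m <- msupp u) u@_m *: mono_mode m p v.

Definition homog (w : nat) (u : V) : Prop :=
  forall m, m \in msupp u -> mwt m = w.

(* H^+ : fixed points of the automorphism induced by h -> -h, i.e. the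
   span of the monomials of even degree *)
Definition in_Hplus (u : V) : Prop :=
  forall m, m \in msupp u -> ~~ odd (mdeg m).

Definition zcirc (w : nat) (u v : V) : V :=
  \sum_(i < w.+1) ('C(w, i))%:R *: vmode u (i%:Z - 2) v.

Definition in_O_Hplus (x : V) : Prop :=
  exists s : seq (C * nat * V * V),
    (forall e, e \in s -> [/\ homog e.1.1.2 e.1.2, in_Hplus e.1.2 & in_Hplus e.2])
    /\ x = \sum_(e <- s) e.1.1.1 *: zcirc e.1.1.2 e.1.2 e.2.

(* equality of classes in Zhu's algebra A(H^+) = H^+/O(H^+):
   [u] = [v]  iff  u - v \in O(H^+) *)
Definition zhu_class_eq (u v : V) : Prop := in_O_Hplus (u - v).

Definition S_abcd (a b c d : 'I_l) (m n r s : nat) : V :=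
  hvar C a m.-1 * hvar C b n.-1 * hvar C c r.-1 * hvar C d s.-1 * 1.

End Modes.

From HB Require Import structures.
From mathcomp Require Import all_boot all_order all_algebra.
From mathcomp Require Import finmap.
From mathcomp Require Import monalg.
From mathcomp Require Import zify ring.
Import GRing.Theory Num.Theory.
Local Open Scope ring_scope.

Set Implicit Arguments.
Unset Strict Implicit.
Unset Printing Implicit Defensive.

(* Let u = h_a(-k1-1) h_b(-k2-1)1, of weight w = k1 + k2 + 2, and let v be in
   H^+ without h_a, h_b.  On such v the modes u_p, p >= 0, vanish,
   u_(-1) v = u v and u_(-2) v = (k2+1) h_a(-k1-1) h_b(-k2-2) v
   + (k1+1) h_a(-k1-2) h_b(-k2-1) v, so that
   u o v = u_(-2) v + w u_(-1) v = D_a + D_b, where D_a = (k1+1) (S_a + S) for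
   S = u v and S_a obtained from S by replacing h_a(-k1-1) with h_a(-k1-2).
   The relations for the three pairs among a, b, c (with h_d inside v) give
   2 D_a = (D_a + D_b) + (D_a + D_c) - (D_b + D_c) in O(H^+): lowering one
   mode by one flips the sign of the class, and induction on m + n + r + s
   concludes. *)

Lemma scalerA_mulr3 (R : pzSemiRingType) (A : semiAlgType R) (c1 c2 c3 : R) (u w v : A) :
  c1 *: (u * (c2 *: (w * (c3 *: v)))) = (c1 * c2 * c3) *: (u * w * v).
Proof. by rewrite -!scalerAr !scalerA !mulrA. Qed.

Lemma gbinom_nat (F : numFieldType) (n k : nat) : gbinom F n k = 'C(n, k)%:R.
Proof.
have prod_ffact j : \prod_(i < j) ((n%:Z - i%:Z)%:~R : F) = (n ^_ j)%:R.
  elim: j => [|j IHj]; first by rewrite big_ord0 ffactn0.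
  rewrite big_ord_recr /= IHj ffactnSr natrM.
  by case: (leqP j n) => [le_jn|/ffact_small->]; rewrite ?mul0r // subzn.
rewrite /gbinom prod_ffact -bin_ffact natrM mulfK //.
by rewrite pnatr_eq0 -lt0n fact_gt0.
Qed.

Lemma perm_eq_pair (T : eqType) (s : seq T) x y :
  perm_eq s [:: x; y] -> s = [:: x; y] \/ s = [:: y; x].
Proof.
move=> pe; have := perm_size pe; case: s pe => [|u [|w []]] // pe _.
have := perm_mem pe u; rewrite !inE eqxx /= => /esym/orP[]/eqP ux; subst u.
  by left; rewrite (@perm_small_eq _ [:: w] [:: y]) // -(perm_cons x).
right; rewrite (@perm_small_eq _ [:: w] [:: x]) // -(perm_cons y).
by rewrite (perm_trans pe) // (perm_catC [:: x] [:: y]).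
Qed.

(* M p stands for u_p v, for u of weight w.+1 whose nonnegative modes kill v:
   the left-hand side is then u o v. *)
Lemma circle_sum (R : pzSemiRingType) (W : lSemiModType R) (M : int -> W) w :
  (forall p, 0 <= p -> M p = 0) ->
  \sum_(i < w.+2) 'C(w.+1, i)%:R *: M (i%:Z - 2) = M (-2) + w.+1%:R *: M (-1).
Proof.
move=> M0; rewrite 2!big_ord_recl big1 ?addr0 => [|i _]; last first.
  by rewrite M0 ?scaler0 //= /bump !leq0n; lia.
by rewrite bin0 bin1 scale1r.
Qed.

Section PairSums.
Variables (R : pzSemiRingType) (A : comSemiAlgType R).

(* For f = hvar a, g = hvar b: the terms of the normal ordered product in which
   h_a(-n-1) and h_b(-m-1) act with total mode t, the weights binom(-j-1, k) of
   the modes j = -n-1, -m-1 being binom(n, k1) and binom(m, k2). *)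
Definition pair_sum B k1 k2 (t : int) (f g : nat -> A) (v : A) : A :=
  \sum_(n < B) \sum_(m < B)
    ('C(n, k1) * 'C(m, k2) * (t + n.+1%:Z + m.+1%:Z == 0))%:R *: (f n * g m * v).

Lemma pair_sumC B k1 k2 t f g v : pair_sum B k1 k2 t f g v = pair_sum B k2 k1 t g f v.
Proof.
rewrite /pair_sum exchange_big; apply: eq_bigr => m _; apply: eq_bigr => n _.
by rewrite addrAC [('C(n, k1) * _)%N]mulnC [f n * g m]mulrC.
Qed.

Lemma pair_term_eq0 k1 k2 (t : int) (f g : nat -> A) (v : A) n m :
    ~ [/\ (k1 <= n)%N, (k2 <= m)%N & t + n.+1%:Z + m.+1%:Z = 0] ->
  ('C(n, k1) * 'C(m, k2) * (t + n.+1%:Z + m.+1%:Z == 0))%:R *: (f n * g m * v) = 0.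
Proof.
move=> supp; suff -> : ('C(n, k1) * 'C(m, k2) * (t + n.+1%:Z + m.+1%:Z == 0)%R)%N = 0%N.
  by rewrite scale0r.
case: (leqP k1 n) => [k1n|/bin_small->] //; case: (leqP k2 m) => [k2m|/bin_small->];
  rewrite ?muln0 //.
by case: eqP => [t_nm|_]; [case: supp; split | rewrite muln0].
Qed.

Lemma pair_sum_eq0 B k1 k2 t f g v : - (k1 + k2).+1%:Z <= t ->
  pair_sum B k1 k2 t f g v = 0.
Proof.
move=> t_ge; apply: big1 => n _; apply: big1 => m _.
by apply: pair_term_eq0 => -[]; lia.
Qed.

Lemma pair_sum_top B k1 k2 t f g v : (k1 < B)%N -> (k2 < B)%N ->
  t = - (k1 + k2).+2%:Z -> pair_sum B k1 k2 t f g v = f k1 * g k2 * v.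
Proof.
move=> k1B k2B t_eq; rewrite /pair_sum pair_bigA (bigD1 (Ordinal k1B, Ordinal k2B)) //=.
rewrite big1 => [|[n m] /=]; last first.
  rewrite xpair_eqE -!val_eqE /= => nm.
  by apply: pair_term_eq0 => -[k1n k2m t_nm]; lia.
have -> : t + k1.+1%:Z + k2.+1%:Z == 0 by apply/eqP; lia.
by rewrite !binn addr0 scale1r.
Qed.

Lemma pair_sum_next B k1 k2 t f g v : (k1.+1 < B)%N -> (k2.+1 < B)%N ->
    t = - (k1 + k2).+3%:Z ->
  pair_sum B k1 k2 t f g v =
    k2.+1%:R *: (f k1 * g k2.+1 * v) + k1.+1%:R *: (f k1.+1 * g k2 * v).
Proof.
move=> k1B k2B t_eq; have k1B' := ltnW k1B; have k2B' := ltnW k2B.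
rewrite /pair_sum pair_bigA (bigD1 (Ordinal k1B', Ordinal k2B)) //=.
rewrite (bigD1 (Ordinal k1B, Ordinal k2B')) //=; last first.
  by rewrite xpair_eqE -!val_eqE /= (gtn_eqF (ltnSn k1)).
rewrite big1 => [|[n m] /=]; last first.
  rewrite !xpair_eqE -!val_eqE /= => /andP[nm1 nm2].
  by apply: pair_term_eq0 => -[k1n k2m t_nm]; lia.
have -> : t + k1.+1%:Z + k2.+2%:Z == 0 by apply/eqP; lia.
have -> : t + k1.+2%:Z + k2.+1%:Z == 0 by apply/eqP; lia.
by rewrite !binn !binSn mul1n !muln1 addr0.
Qed.

End PairSums.

Section SubspaceCongruence.
Variables (K : numFieldType) (W : lmodType K) (O : W -> Prop).
Hypotheses (O0 : O 0) (OD : forall x y, O x -> O y -> O (x + y))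
  (OZ : forall (c : K) x, O x -> O (c *: x)).

Lemma subspaceB x y : O x -> O y -> O (x - y).
Proof. by move=> Ox Oy; apply: OD => //; rewrite -scaleN1r; apply: OZ. Qed.

Lemma subspace_natrZ n x : O (n.+1%:R *: x) -> O x.
Proof.
move=> Ox; rewrite -[x]scale1r -(@mulVf _ n.+1%:R) ?pnatr_eq0 // -scalerA.
exact: OZ.
Qed.

Lemma subspace_pairwise_sums x y z : O (x + y) -> O (x + z) -> O (y + z) -> O x.
Proof.
move=> Oxy Oxz Oyz; apply: (@subspace_natrZ 1).
rewrite scaler_nat mulr2n -(addrK (y + z) (x + x)) -addrACA.
by apply: subspaceB => //; apply: OD.
Qed.

Lemma subspace_trans x y z : O (x - y) -> O (y - z) -> O (x - z).
Proof. by move=> Oxy Oyz; rewrite -(subrK y x) -addrA; apply: OD. Qed.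

Lemma subspace_signed_trans (s : K) x y z :
  O (x - s *: y) -> O (y - z) -> O (x - s *: z).
Proof.
by move=> Oxy Oyz; apply: subspace_trans Oxy _; rewrite -scalerBr; apply: OZ.
Qed.

Lemma alternating_subspace (f : nat -> W) :
  (forall k, O (f k.+1 + f k)) -> forall k, O (f k - (-1) ^+ k *: f 0).
Proof.
move=> Of; elim=> [|k IHk]; first by rewrite expr0 scale1r subrr.
rewrite exprS -scalerA; apply: subspace_signed_trans IHk.
by rewrite scaleN1r opprK.
Qed.

Lemma alternating4_subspace (X : nat -> nat -> nat -> nat -> W) :
    (forall i j k h, O (X i.+1 j k h + X i j k h)) ->
    (forall i j k h, O (X i j.+1 k h + X i j k h)) ->
    (forall i j k h, O (X i j k.+1 h + X i j k h)) ->
    (forall i j k h, O (X i j k h.+1 + X i j k h)) ->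
  forall i j k h, O (X i j k h - (-1) ^+ (i + j + k + h) *: X 0 0 0 0).
Proof.
move=> Xi Xj Xk Xh i j k h; rewrite -!addnA !exprD -!scalerA.
apply: subspace_signed_trans (alternating_subspace (fun i => Xi i j k h) i) _.
apply: subspace_signed_trans (alternating_subspace (fun j => Xj 0 j k h) j) _.
exact: subspace_signed_trans (alternating_subspace (fun k => Xk 0 0 k h) k)
  (alternating_subspace (Xh 0 0 0) h).
Qed.

End SubspaceCongruence.

Section Raise.
Variables (R : pzRingType) (A : comAlgType R).

Definition raise (f : nat -> A) k w := k.+1%:R *: (f k.+1 * w + f k * w).

(* Stated with M1 and M2 abstracted so that it is applied, not rewritten, in the
   Fock space, where failed unifications unfold the monoid-algebra operations
   and are extremely slow. *)
Lemma raise_pair (f g : nat -> A) k1 k2 v M1 M2 :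
    M2 = k2.+1%:R *: (f k1 * g k2.+1 * v) + k1.+1%:R *: (f k1.+1 * g k2 * v) ->
    M1 = f k1 * g k2 * v ->
  M2 + (k1 + k2).+2%:R *: M1 = raise f k1 (g k2 * v) + raise g k2 (f k1 * v).
Proof. by move=> -> ->; rewrite /raise !scaler_nat; ring. Qed.

End Raise.

Section RaiseRelations.
Variables (K : numFieldType) (A : comAlgType K) (O : A -> Prop).
Hypotheses (O0 : O 0) (OD : forall x y, O x -> O y -> O (x + y))
  (OZ : forall (c : K) x, O x -> O (c *: x)).

Lemma raise_mem (f g h : nat -> A) e i j k :
    O (raise f i (g j * (h k * e)) + raise g j (f i * (h k * e))) ->
    O (raise h k (f i * (g j * e)) + raise f i (h k * (g j * e))) ->
    O (raise g j (h k * (f i * e)) + raise h k (g j * (f i * e))) ->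
  O (f i.+1 * (g j * (h k * e)) + f i * (g j * (h k * e))).
Proof.
move=> Ofg Ohf Ogh; apply: (subspace_natrZ OZ (n := i)).
apply: (subspace_pairwise_sums OD OZ (z := raise h k (f i * (g j * e))) Ofg).
  by rewrite addrC [g j * (h k * e)]mulrCA.
by rewrite [f i * (h k * e)]mulrCA [f i * (g j * e)]mulrCA.
Qed.

Variables (I : eqType) (F : I -> nat -> A).
Hypothesis pair_rel : forall p q r s, uniq [:: p; q; r; s] -> forall i j k h,
  O (raise (F p) i (F q j * (F r k * F s h)) + raise (F q) j (F p i * (F r k * F s h))).

Definition monomial4 p q r s i j k h := F p i * F q j * F r k * F s h * 1.

Lemma monomial4_raise p q r s i j k h : uniq [:: p; q; r; s] ->
  O (monomial4 p q r s i.+1 j k h + monomial4 p q r s i j k h).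
Proof.
move=> pqrs; rewrite /monomial4 !mulr1 -!mulrA.
apply: raise_mem; apply: pair_rel => //.
  by rewrite -(uniq_catCA [:: p; q] [:: r] [:: s]).
by rewrite -(uniq_catCA [:: p] [:: q; r] [:: s]).
Qed.

Lemma monomial4_rot p q r s i j k h :
  monomial4 p q r s i j k h = monomial4 q r s p j k h i.
Proof. by rewrite /monomial4; ring. Qed.

Lemma alternating_monomial4 p q r s : uniq [:: p; q; r; s] -> forall i j k h,
  O (monomial4 p q r s i j k h - (-1) ^+ (i + j + k + h) *: monomial4 p q r s 0 0 0 0).
Proof.
move=> pqrs; have rot_pqrs n : uniq (rot n [:: p; q; r; s]) by rewrite rot_uniq.
apply: alternating4_subspace => // i j k h.
- exact: monomial4_raise.
- by rewrite !(monomial4_rot p); apply: monomial4_raise (rot_pqrs 1%N).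
- by rewrite !(monomial4_rot p) !(monomial4_rot q); apply: monomial4_raise (rot_pqrs 2%N).
- rewrite !(monomial4_rot p) !(monomial4_rot q) !(monomial4_rot r).
  exact: monomial4_raise (rot_pqrs 3%N).
Qed.

End RaiseRelations.

Section FockModes.
Variables (l : nat) (C : numClosedFieldType).
Local Notation V := (Fock l C).
Local Notation x := (hvar C).

Definition free_of (a : 'I_l) (v : V) :=
  forall m, m \in msupp v -> forall k, m (a, k) = 0%N.

Lemma free_of0 a : free_of a 0.
Proof. by move=> m; rewrite msupp0. Qed.

Lemma hann_free a j v : free_of a v -> hann a j v = 0.
Proof.
case: j => [|j] //= va; rewrite /pderiv big1_seq ?scaler0 // => m /= /va ->.
by rewrite mulr0 monalgU0.
Qed.

Lemma nopart_0 B fs t : nopart B fs t (0 : V) = 0.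
Proof.
elim: fs t => [|[a k] fs IHfs] t /=; first by case: ifP.
rewrite big1 // => j _; case: ifP => _;
  by rewrite ?(hann_free _ (free_of0 _)) IHfs ?mulr0 scaler0.
Qed.

Lemma nopart_nil B t (v : V) : nopart B [::] t v = (t == 0)%:R *: v.
Proof. by rewrite /=; case: (t == 0); rewrite ?scale1r ?scale0r. Qed.

Lemma nopart_cons_free B a k fs t v : free_of a v ->
  nopart B ((a, k) :: fs) t v =
  \sum_(n < B) 'C(n, k)%:R *: (x a n * nopart B fs (t + n.+1%:Z) v).
Proof.
move=> va.
(* Annihilation modes (z >= 0) kill v; the creation mode z = -n-1 has weight
   gbinom (- z - 1) k = binom(n, k). *)
pose G (z : int) := gbinom C (- z - 1) k *:
  (if z < 0 then x a `|z|.-1 * nopart B fs (t - z) v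
   else nopart B fs (t - z) (hann a `|z| v)).
have -> : nopart B ((a, k) :: fs) t v = \sum_(j < (B + B).+1) G (j%:Z - B%:Z) by [].
rewrite -(big_mkord xpredT (fun j => G (j%:Z - B%:Z))).
rewrite (@big_cat_nat _ _ _ B) // ?leqW ?leq_addr // /=.
rewrite [X in _ + X]big_nat_cond [X in _ + X]big1 ?addr0 => [|j /andP[/andP[Bj _] _]];
  last first.
  by rewrite /G ifF ?hann_free ?nopart_0 ?scaler0 // subr_lt0 ltz_nat ltnNge Bj.
rewrite big_nat_rev big_mkord; apply: eq_bigr => n _.
have -> : (0 + B - n.+1)%N%:Z - B%:Z = - n.+1%:Z by have := ltn_ord n; lia.
rewrite /G opprK oppr_lt0 ltz_nat /=.
have -> : n.+1%:Z - 1 = n by lia.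
by rewrite gbinom_nat.
Qed.

Lemma nopart_pair B a k1 b k2 t v : free_of a v -> free_of b v ->
  nopart B [:: (a, k1); (b, k2)] t v = pair_sum B k1 k2 t (x a) (x b) v.
Proof.
move=> va vb; rewrite nopart_cons_free //; apply: eq_bigr => n _.
rewrite nopart_cons_free // mulr_sumr scaler_sumr; apply: eq_bigr => m _.
by rewrite nopart_nil scalerA_mulr3 -!natrM.
Qed.

Lemma hvar_mul (a b : 'I_l) k1 k2 :
  x a k1 * x b k2 = << mmul (ucm ((a, k1) : hvarT l)) (ucm (b, k2)) >>.
Proof. by rewrite /hvar malgM_def fgmulUU mulr1. Qed.

Lemma factors_pair (w1 w2 : hvarT l) : w1 != w2 ->
  perm_eq (factors (mmul (ucm w1) (ucm w2))) [:: w1; w2].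
Proof.
move=> w12; set m := mmul _ _.
have m_supp w : (w \in finsupp m) = (w == w1) || (w == w2).
  by rewrite /m mdomD !mdomU in_fsetU !in_fset1.
have -> : factors m = enum_fset (finsupp m).
  have : all (fun w => m w == 1%N) (enum_fset (finsupp m)).
    apply/allP => w; rewrite m_supp /m cmM !cmU.
    by case/orP=> /eqP->; rewrite eqxx ?(negbTE w12) ?(eq_sym w2) ?(negbTE w12).
  rewrite /factors; elim: (enum_fset _) => //= w s IHs /andP[/eqP-> /IHs->] //.
apply: uniq_perm; rewrite ?fset_uniq /= ?inE ?andbT //.
by move=> w; rewrite m_supp !inE.
Qed.

Lemma vmode_pair a k1 b k2 p v : a != b -> free_of a v -> free_of b v ->
  exists2 B, (k1 + k2 + `|p| < B)%N &
    vmode (x a k1 * x b k2) p v = pair_sum B k1 k2 (p + 1 - (k1 + k2).+2%:Z) (x a) (x b) v.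
Proof.
move=> ab va vb.
rewrite /vmode hvar_mul msuppU1 big_seq_fset1 mcoeffUU scale1r /mono_mode.
have ab' : (a, k1) != (b, k2) by rewrite xpair_eqE negb_and ab.
(* The two factors of the monomial come in an unspecified order. *)
have [->|->] := perm_eq_pair (factors_pair ab');
  rewrite nopart_pair // !big_cons big_nil /=.
- have -> : (k1.+1 + (k2.+1 + 0) = (k1 + k2).+2)%N by lia.
  by eexists; last reflexivity; lia.
- have -> : (k2.+1 + (k1.+1 + 0) = (k1 + k2).+2)%N by lia.
  eexists; last by rewrite [LHS]pair_sumC.
  lia.
Qed.

Lemma zcirc_pair a k1 b k2 v : a != b -> free_of a v -> free_of b v ->
  zcirc (k1 + k2).+2 (x a k1 * x b k2) v =
    raise (x a) k1 (x b k2 * v) + raise (x b) k2 (x a k1 * v).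
Proof.
move=> ab va vb.
rewrite /zcirc (circle_sum (M := vmode (x a k1 * x b k2) ^~ v)) => [|p p_ge]; last first.
  by have [B _ ->] := vmode_pair k1 k2 p ab va vb; apply: pair_sum_eq0; lia.
apply: raise_pair.
  by have [B B_gt ->] := vmode_pair k1 k2 (-2) ab va vb; apply: pair_sum_next; lia.
by have [B B_gt ->] := vmode_pair k1 k2 (-1) ab va vb; apply: pair_sum_top; lia.
Qed.

Lemma in_O_Hplus0 : @in_O_Hplus l C 0.
Proof. by exists [::]; rewrite big_nil. Qed.

Lemma in_O_HplusD (u w : V) : in_O_Hplus u -> in_O_Hplus w -> in_O_Hplus (u + w).
Proof.
move=> [s1 [s1P ->]] [s2 [s2P ->]]; exists (s1 ++ s2); rewrite big_cat.
by split=> // e; rewrite mem_cat => /orP[/s1P|/s2P].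
Qed.

Lemma in_O_HplusZ c (u : V) : in_O_Hplus u -> in_O_Hplus (c *: u).
Proof.
move=> [s [sP ->]]; exists [seq (c * e.1.1.1, e.1.1.2, e.1.2, e.2) | e <- s].
split=> [e /mapP[e' /sP e'P ->] //|].
by rewrite big_map scaler_sumr; apply: eq_bigr => e _; rewrite scalerA.
Qed.

Lemma in_O_Hplus_zcirc w (u v : V) : homog w u -> in_Hplus u -> in_Hplus v ->
  in_O_Hplus (zcirc w u v).
Proof.
move=> wu u_even v_even; exists [:: (1, w, u, v)].
by rewrite big_seq1 scale1r; split=> // e; rewrite inE => /eqP->.
Qed.

Lemma mwtM (m1 m2 : cmonom (hvarT l)) : mwt (mmul m1 m2) = (mwt m1 + mwt m2)%N.
Proof.
have mwt_sub (m : cmonom (hvarT l)) (d : {fset hvarT l}) : (finsupp m `<=` d)%fset ->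
    mwt m = (\sum_(w <- d) m w * w.2.+1)%N.
  move=> md; rewrite /mwt (big_fset_incl _ md) // => w _.
  by rewrite -cmE_neq0 negbK => /eqP->.
rewrite (mwt_sub _ (finsupp m1 `|` finsupp m2)%fset) ?mdomD //.
rewrite (mwt_sub m1 _ (fsubsetUl _ (finsupp m2))) (mwt_sub m2 _ (fsubsetUr (finsupp m1) _)).
rewrite -big_split /=.
by apply: eq_bigr => w _; rewrite cmM mulnDl.
Qed.

Lemma mwtU (w : hvarT l) : mwt (ucm w) = w.2.+1.
Proof. by rewrite /mwt mdomU big_seq_fset1 cmUU mul1n. Qed.

Lemma homog_pair a k1 b k2 : @homog l C (k1 + k2).+2 (x a k1 * x b k2).
Proof.
by rewrite hvar_mul => m; rewrite msuppU1 => /fset1P->; rewrite mwtM !mwtU addnS.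
Qed.

Lemma in_Hplus_pair a k1 b k2 : @in_Hplus l C (x a k1 * x b k2).
Proof.
by rewrite hvar_mul => m; rewrite msuppU1 => /fset1P->; rewrite mdegM !mdegU.
Qed.

Lemma free_of_pair f a k1 b k2 : f != a -> f != b -> free_of f (x a k1 * x b k2).
Proof.
move=> fa fb; rewrite hvar_mul => m; rewrite msuppU1 => /fset1P-> k.
by rewrite cmM !cmU !xpair_eqE ![_ == f]eq_sym (negbTE fa) (negbTE fb).
Qed.

Lemma zhu_pair_rel p q r s : uniq [:: p; q; r; s] -> forall i j k h,
  @in_O_Hplus l C (raise (x p) i (x q j * (x r k * x s h)) +
                  raise (x q) j (x p i * (x r k * x s h))).
Proof.
move=> /and4P[]; rewrite !inE !negb_or => /and3P[pq pr ps] /andP[qr qs] _ _ i j k h.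
rewrite -zcirc_pair //; try by apply: free_of_pair.
by apply: in_O_Hplus_zcirc; [apply: homog_pair | apply: in_Hplus_pair..].
Qed.

End FockModes.

Theorem lemma4p1p6 (l : nat) (C : numClosedFieldType) (a b c d : 'I_l)
  (Hdistinct : uniq [:: a; b; c; d])
  (m n r s : nat) (Hm : (0 < m)%N) (Hn : (0 < n)%N) (Hr : (0 < r)%N) (Hs : (0 < s)%N) :
  zhu_class_eq (S_abcd C a b c d m n r s)
    ((-1) ^+ (m + n + r + s) *: S_abcd C a b c d 1 1 1 1).
Proof.
case: m n r s Hm Hn Hr Hs => [|m] [|n] [|r] [|s] // _ _ _ _.
have -> : (-1) ^+ (m.+1 + n.+1 + r.+1 + s.+1) = (-1) ^+ (m + n + r + s) :> C.
  by rewrite !addSn !addnS !exprS !mulN1r !opprK.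
(* S_abcd C a b c d m.+1 n.+1 r.+1 s.+1 is monomial4 (hvar C) a b c d m n r s. *)
exact: (alternating_monomial4 (@in_O_Hplus0 l C) (@in_O_HplusD l C) (@in_O_HplusZ l C)
  (@zhu_pair_rel l C) Hdistinct).
Qed.
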